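(* For each integer $n\ge0$ let $\theta^\Delta_n(x)=\sum_{k=0}^n\frac{(n+k)!}{2^k(n-k)!\,k!}(x)_{n-k}$, where $(x)_j=x(x-1)\cdots(x-j+1)$ and $(x)_0=1$. Then for every $n\ge1$ and every $x\in\mathbb{C}$, \[ \theta^\Delta_n(x+1)-2\theta^\Delta_n(x)+x\,\theta^\Delta_{n-1}(x-1)=0, \] \[ \theta^\Delta_{n+1}(x)+(x-2n-1)\theta^\Delta_n(x)-2x\,\theta^\Delta_n(x-1)=0 . \] *)

From HB Require Import structures.
From mathcomp Require Import all_boot all_order all_algebra.
From mathcomp Require Import complex.
From mathcomp Require Import Rstruct.
Set Implicit Arguments. Unset Strict Implicit. Unset Printing Implicit Defensive.
Import Order.TTheory GRing.Theory Num.Theory.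
Local Open Scope ring_scope.

Notation Cplx := (complex.complex Rdefinitions.R).

Definition falling (F : pzRingType) (x : F) (j : nat) : F :=
  \prod_(i < j) (x - i%:R).

Definition thetaD (F : fieldType) (n : nat) (x : F) : F :=
  \sum_(0 <= k < n.+1)
     ((n + k)`!%:R / (2 ^+ k * (n - k)`!%:R * k`!%:R)) * falling x (n - k).

From HB Require Import structures.
From mathcomp Require Import all_boot all_order all_algebra.
From mathcomp Require Import complex Rstruct.
From mathcomp Require Import zify ring.
Set Implicit Arguments. Unset Strict Implicit. Unset Printing Implicit Defensive.
Import GRing.Theory Num.Theory.
Local Open Scope ring_scope.

(* In the falling-factorial basis, theta^Delta_n(x) = sum_j c(n, j) (x)_j with
   c(n, j) = (2n - j)! / (2^(n-j) j! (n-j)!).  The three operations occurring in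
   the identities act on this basis by (x+1)_(j+1) = (x)_(j+1) + (j+1) (x)_j,
   x (x)_j = (x)_(j+1) + j (x)_j and x (x-1)_j = (x)_(j+1), so comparing
   coefficients reduces both identities to three-term recurrences for c(n, j),
   which are identities between ratios of factorials in characteristic 0. *)

Section FallingSums.
Variable R : comPzRingType.
Implicit Types (x : R) (a : nat -> R).

Lemma fallingSr x j : falling x j.+1 = falling x j * (x - j%:R).
Proof. by rewrite /falling big_ord_recr. Qed.

Lemma fallingS x j : falling x j.+1 = x * falling (x - 1) j.
Proof.
rewrite /falling big_ord_recl subr0; congr (_ * _); apply: eq_bigr => i _.
by rewrite lift0 -natr1 opprD addrA addrAC.
Qed.

Lemma mulx_falling x j : x * falling x j = falling x j.+1 + j%:R * falling x j.
Proof. by rewrite fallingSr; ring. Qed.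

Lemma falling0 x : falling x 0 = 1.
Proof. by rewrite /falling big_ord0. Qed.

Lemma falling_addr1S x j :
  falling (x + 1) j.+1 = falling x j.+1 + j.+1%:R * falling x j.
Proof. by rewrite fallingS addrK fallingSr -natr1; ring. Qed.

Definition shift_coef (a : nat -> R) j := if j is i.+1 then a i else 0.

Definition falling_sum (a : nat -> R) N x := \sum_(0 <= j < N) a j * falling x j.

Lemma falling_sum_shift a N x :
  \sum_(0 <= j < N) a j * falling x j.+1 = falling_sum (shift_coef a) N.+1 x.
Proof. by rewrite /falling_sum big_nat_recl // mul0r add0r. Qed.

Lemma falling_sum_mulx_subr1 a N x :
  x * falling_sum a N (x - 1) = falling_sum (shift_coef a) N.+1 x.
Proof.
rewrite -falling_sum_shift mulr_sumr; apply: eq_bigr => j _.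
by rewrite fallingS mulrCA.
Qed.

Lemma falling_sum_mulx a N x : a N = 0 ->
  x * falling_sum a N.+1 x = falling_sum (fun j => shift_coef a j + j%:R * a j) N.+1 x.
Proof.
move=> aN0; rewrite /falling_sum mulr_sumr.
under eq_bigr => j _ do rewrite mulrCA mulx_falling mulrDr.
rewrite big_split /= falling_sum_shift /falling_sum big_nat_recr //= aN0 mul0r addr0.
by rewrite -big_split /=; apply: eq_bigr => j _; ring.
Qed.

Lemma falling_sum_addr1 a N x : a N = 0 ->
  falling_sum a N (x + 1) = falling_sum (fun j => a j + j.+1%:R * a j.+1) N x.
Proof.
move=> aN0; rewrite /falling_sum.
under [RHS]eq_bigr => j _ do rewrite mulrDl.
rewrite big_split /=; case: N aN0 => [|N] aN0; first by rewrite !big_geq // addr0.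
rewrite [X in _ = _ + X]big_nat_recr //= aN0 mulr0 mul0r addr0 !big_nat_recl //.
rewrite !falling0 -addrA -big_split /=; congr (_ + _).
by apply: eq_bigr => j _; rewrite falling_addr1S; ring.
Qed.
End FallingSums.

Section ThetaDelta.
Variable F : fieldType.
Hypothesis F_char0 : [pchar F] =i pred0.

Lemma natf_neq0 k : (0 < k)%N -> k%:R != 0 :> F.
Proof. by rewrite (pcharf0P _).1 // -lt0n. Qed.

Definition thetaD_coef n j : F :=
  if (j <= n)%N then (2 * n - j)`!%:R / (2 ^+ (n - j) * j`!%:R * (n - j)`!%:R) else 0.

Lemma thetaD_coefE n j m k : n = (j + m)%N -> k = (j + 2 * m)%N ->
  thetaD_coef n j = k`!%:R / (2 ^+ m * j`!%:R * m`!%:R).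
Proof. by move=> -> ->; rewrite /thetaD_coef leq_addr addKn; congr (_`!%:R / _); lia. Qed.

Lemma thetaD_coef_gt n j : (n < j)%N -> thetaD_coef n j = 0.
Proof. by rewrite /thetaD_coef ltnNge => /negbTE ->. Qed.

Lemma thetaD_coefnn n : thetaD_coef n n = 1.
Proof.
rewrite (@thetaD_coefE n n 0 n) ?addn0 ?muln0 // expr0 mul1r mulr1 divff //.
by rewrite natf_neq0 ?fact_gt0.
Qed.

Ltac field_char0 :=
  field; by rewrite ?nat1r -?natrX -?natrD ?natf_neq0 ?fact_gt0 ?expn_gt0.

Lemma thetaD_coef_rec_diff n j :
  j.+1%:R * thetaD_coef n.+1 j.+1 - thetaD_coef n.+1 j + shift_coef (thetaD_coef n) j = 0.
Proof.
case: j => [|i] /=.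
  rewrite (@thetaD_coefE n.+1 1 n (2 * n).+1 ltac:(lia) ltac:(lia)).
  rewrite (@thetaD_coefE n.+1 0 n.+1 (2 * n).+2 ltac:(lia) ltac:(lia)).
  rewrite !factS !exprS addr0; field_char0.
case: (ltnP i n) => [ltin | ]; last first.
  rewrite leq_eqVlt => /predU1P [<- | ltni].
    by rewrite thetaD_coef_gt // mulr0 !thetaD_coefnn add0r addNr.
  by rewrite !thetaD_coef_gt ?mulr0 ?oppr0 ?addr0 //; lia.
have [m ->] : exists m, n = (i + m).+1 by exists (n - i.+1)%N; lia.
rewrite (@thetaD_coefE (i + m).+2 i.+2 m (i + 2 * m).+2 ltac:(lia) ltac:(lia)).
rewrite (@thetaD_coefE (i + m).+2 i.+1 m.+1 (i + 2 * m).+3 ltac:(lia) ltac:(lia)).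
rewrite (@thetaD_coefE (i + m).+1 i m.+1 (i + 2 * m).+2 ltac:(lia) ltac:(lia)).
rewrite !factS !exprS; field_char0.
Qed.

Lemma thetaD_coef_rec_mul n j :
  thetaD_coef n.+1 j + (j%:R - (2 * n + 1)%N%:R) * thetaD_coef n j
  - shift_coef (thetaD_coef n) j = 0.
Proof.
case: j => [|i] /=.
  rewrite (@thetaD_coefE n.+1 0 n.+1 (2 * n).+2 ltac:(lia) ltac:(lia)).
  rewrite (@thetaD_coefE n 0 n (2 * n) ltac:(lia) ltac:(lia)).
  rewrite !factS !exprS subr0; field_char0.
case: (ltnP i n) => [ltin | ]; last first.
  rewrite leq_eqVlt => /predU1P [<- | ltni].
    by rewrite (@thetaD_coef_gt n n.+1) // mulr0 addr0 !thetaD_coefnn subrr.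
  by rewrite !thetaD_coef_gt ?mulr0 ?addr0 ?subr0 //; lia.
have [m ->] : exists m, n = (i + m).+1 by exists (n - i.+1)%N; lia.
rewrite (@thetaD_coefE (i + m).+2 i.+1 m.+1 (i + 2 * m).+3 ltac:(lia) ltac:(lia)).
rewrite (@thetaD_coefE (i + m).+1 i.+1 m (i + 2 * m).+1 ltac:(lia) ltac:(lia)).
rewrite (@thetaD_coefE (i + m).+1 i m.+1 (i + 2 * m).+2 ltac:(lia) ltac:(lia)).
rewrite !factS !exprS; field_char0.
Qed.

Lemma thetaD_falling_sum n N (x : F) :
  (n < N)%N -> thetaD n x = falling_sum (thetaD_coef n) N x.
Proof.
move=> ltnN; rewrite /thetaD /falling_sum big_nat_rev [RHS](@big_cat_nat _ _ _ n.+1) //=.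
rewrite [X in _ = _ + X]big_nat_cond [X in _ = _ + X]big1 ?addr0; last first.
  by move=> j /andP[/andP[ltnj _] _]; rewrite thetaD_coef_gt ?mul0r.
apply: eq_big_nat => k /andP[_ ltkn]; rewrite add0n subSS.
rewrite subKn; last by rewrite -ltnS.
rewrite /thetaD_coef -ltnS ltkn.
by have -> : (n + (n - k) = 2 * n - k)%N by lia.
Qed.

Lemma thetaD_diff_rec n (x : F) :
  thetaD n.+1 (x + 1) - 2 * thetaD n.+1 x + x * thetaD n (x - 1) = 0.
Proof.
rewrite !(@thetaD_falling_sum n.+1 n.+2 _ (ltnSn _)).
rewrite falling_sum_addr1; last exact: thetaD_coef_gt.
rewrite (@thetaD_falling_sum n n.+1 _ (ltnSn _)) falling_sum_mulx_subr1.
rewrite /falling_sum mulr_sumr -sumrB -big_split /=; apply: big1 => j _.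
by rewrite -[RHS](mul0r (falling x j)) -(thetaD_coef_rec_diff n j); ring.
Qed.

Lemma thetaD_mul_rec n (x : F) :
  thetaD n.+1 x + (x - (2 * n + 1)%N%:R) * thetaD n x - 2 * x * thetaD n (x - 1) = 0.
Proof.
rewrite (@thetaD_falling_sum n.+1 n.+2 _ (ltnSn _)).
rewrite (@thetaD_falling_sum n n.+1 (x - 1) (ltnSn _)).
rewrite !(@thetaD_falling_sum n n.+2 x (ltnW (ltnSn _))).
rewrite mulrBl falling_sum_mulx; last exact: thetaD_coef_gt.
rewrite -mulrA falling_sum_mulx_subr1.
rewrite /falling_sum !mulr_sumr -sumrB -big_split -sumrB /=; apply: big1 => j _.
by rewrite -[RHS](mul0r (falling x j)) -(thetaD_coef_rec_mul n j); ring.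
Qed.
End ThetaDelta.

Theorem mainTheorem12 (n : nat) (x : Cplx) : (1 <= n)%N ->
  thetaD n (x + 1) - 2 * thetaD n x + x * thetaD n.-1 (x - 1) = 0 /\
  thetaD n.+1 x + (x - ((2 * n + 1)%N%:R)) * thetaD n x - 2 * x * thetaD n (x - 1) = 0.
Proof.
case: n => [// | n] _.
by split; [apply: thetaD_diff_rec | apply: thetaD_mul_rec]; exact: pchar_num.
Qed.
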